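(* For every $\delta > 0$ there exist win-lose bimatrix games in which no pair of mixed strategies $(\mathbf{p}, \mathbf{q})$ with $|\mathrm{supp}(\mathbf{p})| \le 2$ and $|\mathrm{supp}(\mathbf{q})| \le 2$ is a $(1-\delta)$-well-supported Nash equilibrium.
   Context: A bimatrix game is given by two $m \times n$ payoff matrices $A$ (row player) and $B$ (column player); it is win-lose if all entries lie in $\{0,1\}$. A pair of mixed strategies $(\mathbf{p}, \mathbf{q})$ is an $\epsilon$-well-supported Nash equilibrium if every row $i$ in the support of $\mathbf{p}$ satisfies $\mathbf{e}_i^T A \mathbf{q} \ge \max_\ell \mathbf{e}_\ell^T A \mathbf{q} - \epsilon$, and every column $j$ in the support of $\mathbf{q}$ satisfies $\mathbf{p}^T B \mathbf{e}_j \ge \max_\ell \mathbf{p}^T B \mathbf{e}_\ell - \epsilon$. $\mathrm{supp}$ denotes the set of pure strategies played with positive probability. *)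

From mathcomp Require Import all_boot all_order all_algebra.
From mathcomp Require Import reals.
Set Implicit Arguments. Unset Strict Implicit. Unset Printing Implicit Defensive.
Import Order.TTheory GRing.Theory Num.Theory.
Local Open Scope ring_scope.

Definition win_lose (R : realType) (m n : nat) (A : 'M[R]_(m, n)) : Prop :=
  forall i j, A i j = 0 \/ A i j = 1.

Definition mixed (R : realType) (k : nat) (p : 'I_k -> R) : Prop :=
  (forall i, 0 <= p i) /\ \sum_(i < k) p i = 1.

Definition supp (R : realType) (k : nat) (p : 'I_k -> R) : {set 'I_k} :=
  [set i | p i != 0].

Definition row_payoff (R : realType) (m n : nat) (A : 'M[R]_(m, n))
  (q : 'I_n -> R) (i : 'I_m) : R := \sum_(j < n) A i j * q j.

Definition col_payoff (R : realType) (m n : nat) (B : 'M[R]_(m, n))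
  (p : 'I_m -> R) (j : 'I_n) : R := \sum_(i < m) p i * B i j.

Definition eps_WSNE (R : realType) (m n : nat) (A B : 'M[R]_(m, n))
  (eps : R) (p : 'I_m -> R) (q : 'I_n -> R) : Prop :=
  mixed p /\ mixed q /\
  (forall i, i \in supp p -> forall l, row_payoff A q i >= row_payoff A q l - eps) /\
  (forall j, j \in supp q -> forall l, col_payoff B p j >= col_payoff B p l - eps).

From mathcomp Require Import all_boot all_order all_algebra.
From mathcomp Require Import reals ring.
Set Implicit Arguments. Unset Strict Implicit. Unset Printing Implicit Defensive.
Import Order.TTheory GRing.Theory Num.Theory.
Local Open Scope ring_scope.

(* Rows are the elements of F = Z/67Z, columns the pairs (c, s) with s a
   nonzero quadratic residue.  The row player wins at (i, (c, s)) iff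
   (i - c) / s lies in U = {u | -u and 1 - u are residues}; the column player
   wins iff i is c or c + s.  In an eps-well-supported equilibrium with
   eps < 1 and supports of size at most 2, any two columns have a common
   winning row and any two rows a common winning column, so some deviation
   earns 1 and every pure strategy in a support must earn something: each
   row i of supp p wins against a column of supp q, at which some row i' of
   supp p wins for the column player.  That forces i' - i to be a residue.
   As 67 = 3 (mod 4), -1 is a non-residue, so this relation is asymmetric,
   and a set of at most two rows cannot give every row a successor.  The
   covering property of U used for the first claim (every d is a - t b with
   a, b in U, for every residue t) is checked by computation. *)

Lemma card_le2_subset_pair (T : finType) (S : {set T}) x :
  (#|S| <= 2)%N -> x \in S -> exists y, S \subset [set x; y].
Proof.
move=> S2 xS; have S1 : (#|S :\ x| <= 1)%N by move: S2; rewrite (cardsD1 x) xS.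
have [S0 | [y yS]] := set_0Vmem (S :\ x).
  exists x; apply/subsetP => z zS; rewrite !inE orbb.
  by apply/negPn/negP => zx; have := in_set0 z; rewrite -S0 !inE zx zS.
exists y; apply/subsetP => z zS; rewrite !inE.
have [//|zx] := eqVneq z x; apply/eqP/(card_le1_eqP S1) => //.
by rewrite !inE zx.
Qed.

Lemma pair_cover_card_le2 (T U : finType) (P : U -> T -> Prop) (S : {set T}) x :
  (forall y z, exists l, P l y /\ P l z) -> (#|S| <= 2)%N -> x \in S ->
  exists l, forall z, z \in S -> P l z.
Proof.
move=> Pcover S2 xS; have [y /subsetP Sxy] := card_le2_subset_pair S2 xS.
have [l [Plx Ply]] := Pcover x y; exists l => z /Sxy.
by rewrite !inE => /orP[] /eqP ->.
Qed.

Lemma asym_succ_card_gt2 (T : finType) (r : rel T) (S : {set T}) x :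
  (forall y z, r y z -> ~~ r z y) -> x \in S ->
  (forall y, y \in S -> exists2 z, z \in S & r y z) -> (2 < #|S|)%N.
Proof.
move=> r_asym xS succ; rewrite ltnNge; apply/negP => S2.
have r_irr y : ~~ r y y by apply/negP => ryy; move: (r_asym y y ryy); rewrite ryy.
have [y /subsetP Sxy] := card_le2_subset_pair S2 xS.
have in_xy z : z \in S -> z = x \/ z = y.
  by move/Sxy; rewrite !inE => /orP[] /eqP ->; [left | right].
have [x' x'S rxx'] := succ x xS.
have [ex'|ex'] := in_xy x' x'S; first by move: (r_irr x); rewrite -{2}ex' rxx'.
subst x'; have [y' y'S ryy'] := succ y x'S.
have [ey'|ey'] := in_xy y' y'S; subst y'; last by move: (r_irr y); rewrite ryy'.
by move: (r_asym x y rxx'); rewrite ryy'.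
Qed.

Section WellSupportedEquilibria.
Variable R : realType.

Lemma in_supp k (p : 'I_k -> R) i : (i \in supp p) = (p i != 0).
Proof. by rewrite inE. Qed.

Lemma mixed_supp_nonempty k (p : 'I_k -> R) : mixed p -> exists i, i \in supp p.
Proof.
case=> _ sum1; have [i pi | p0] := pickP (fun i => p i != 0).
  by exists i; rewrite in_supp.
move: sum1; rewrite big1 => [/eqP|i _]; first by rewrite eq_sym oner_eq0.
exact/eqP/negbFE/p0.
Qed.

Lemma mixed_sum_supp k (p b : 'I_k -> R) :
  mixed p -> (forall i, i \in supp p -> b i = 1) -> \sum_(i < k) b i * p i = 1.
Proof.
case=> _ sum1 b1; rewrite -sum1; apply: eq_bigr => i _.
have [ip | ] := boolP (i \in supp p); first by rewrite b1 ?mul1r.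
by rewrite in_supp negbK => /eqP ->; rewrite mulr0.
Qed.

Lemma mixed_payoff_hit k (p a b : 'I_k -> R) eps :
  mixed p -> eps < 1 -> (forall i, i \in supp p -> b i = 1) ->
  \sum_(i < k) b i * p i - eps <= \sum_(i < k) a i * p i ->
  exists2 i, i \in supp p & a i != 0.
Proof.
move=> mp eps1 b1; rewrite mixed_sum_supp // => le_ab.
have [i /andP[ip ai] | none] := pickP (fun i => (i \in supp p) && (a i != 0)).
  by exists i.
suff: \sum_(i < k) a i * p i = 0 by move=> a0; move: le_ab; rewrite a0 subr_le0 leNgt eps1.
apply: big1 => i _; move: (none i); rewrite in_supp.
by have [->|_ /negbFE/eqP ->] := eqVneq (p i) 0; rewrite ?mulr0 ?mul0r.
Qed.

Lemma col_payoffE m n (B : 'M[R]_(m, n)) p j :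
  col_payoff B p j = \sum_(i < m) B i j * p i.
Proof. by apply: eq_bigr => i _; rewrite mulrC. Qed.

Variables (m n : nat) (A B : 'M[R]_(m, n)) (eps : R) (p : 'I_m -> R) (q : 'I_n -> R).
Hypotheses (eps1 : eps < 1) (wsne : eps_WSNE A B eps p q).

Lemma wsne_row_hit l : (forall j, j \in supp q -> A l j = 1) ->
  forall i, i \in supp p -> exists2 j, j \in supp q & A i j != 0.
Proof.
case: wsne => _ [mq [Hrow _]] Al1 i ip.
exact: (mixed_payoff_hit (a := A i) (b := A l) mq eps1 Al1 (Hrow i ip l)).
Qed.

Lemma wsne_col_hit c : (forall i, i \in supp p -> B i c = 1) ->
  forall j, j \in supp q -> exists2 i, i \in supp p & B i j != 0.
Proof.
case: wsne => mp [_ [_ Hcol]] Bc1 j jq; have := Hcol j jq c; rewrite !col_payoffE.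
exact: (mixed_payoff_hit (a := B^~ j) (b := B^~ c) mp eps1 Bc1).
Qed.

End WellSupportedEquilibria.

Theorem no_small_support_wsne (R : realType) m n (A B : 'M[R]_(m, n))
    (r : rel 'I_m) (eps : R) (p : 'I_m -> R) (q : 'I_n -> R) :
  eps < 1 -> (forall i i', r i i' -> ~~ r i' i) ->
  (forall j j', exists l, A l j = 1 /\ A l j' = 1) ->
  (forall i i', exists c, B i c = 1 /\ B i' c = 1) ->
  (forall i i' j, A i j != 0 -> B i' j != 0 -> r i i') ->
  mixed p -> mixed q -> (#|supp p| <= 2)%N -> (#|supp q| <= 2)%N ->
  ~ eps_WSNE A B eps p q.
Proof.
move=> eps1 r_asym coverA coverB AB_r mp mq p2 q2 wsne.
have [j0 j0q] := mixed_supp_nonempty mq.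
have [l Al1] := pair_cover_card_le2 (P := fun l j => A l j = 1) coverA q2 j0q.
have [i0 i0p] := mixed_supp_nonempty mp.
have [c Bc1] := pair_cover_card_le2 (P := fun c i => B i c = 1) coverB p2 i0p.
suff: (2 < #|supp p|)%N by rewrite ltnNge p2.
apply: (asym_succ_card_gt2 r_asym i0p) => i ip.
have [j jq Aij] := wsne_row_hit eps1 wsne Al1 ip.
have [i' i'p Bi'j] := wsne_col_hit eps1 wsne Bc1 jq.
by exists i'; last exact: AB_r Aij Bi'j.
Qed.

Section QuadraticResidues.
Variable K : finComUnitRingType.

Definition qres (x : K) := [exists y, (y \is a GRing.unit) && (y ^+ 2 == x)].

Definition qres_in (s : seq K) (x : K) :=
  has (fun y => (y \is a GRing.unit) && (y ^+ 2 == x)) s.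

Lemma qresP x : reflect (exists2 y, y \is a GRing.unit & y ^+ 2 = x) (qres x).
Proof.
apply: (iffP existsP) => [[y /andP[yU /eqP]] | [y yU <-]]; first by exists y.
by exists y; rewrite yU eqxx.
Qed.

Lemma qres_inE s x : (forall y, y \in s) -> qres x = qres_in s x.
Proof. by move=> sT; apply/existsP/hasP => [[y]|[y _]]; exists y. Qed.

Lemma qres1 : qres 1.
Proof. by apply/qresP; exists 1; rewrite ?unitr1 ?expr1n. Qed.

Lemma qres_unit x : qres x -> x \is a GRing.unit.
Proof. by case/qresP => y yU <-; rewrite unitrX. Qed.

Lemma qresM x y : qres x -> qres y -> qres (x * y).
Proof.
case/qresP => a aU <-; case/qresP => b bU <-.
by apply/qresP; exists (a * b); rewrite ?unitrM ?aU ?exprMn.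
Qed.

Lemma qresV x : qres x -> qres x^-1.
Proof. by case/qresP => a aU <-; apply/qresP; exists a^-1; rewrite ?unitrV ?exprVn. Qed.

Lemma qresN x : ~~ qres (-1) -> qres x -> ~~ qres (- x).
Proof.
move=> qN1 qx; apply: contra qN1 => qNx.
by rewrite -(mulrV (qres_unit qx)) -mulNr qresM ?qresV.
Qed.

End QuadraticResidues.

Arguments qres {K} x.

Section QuadraticResidueGame.
Variable K : finComUnitRingType.

Definition qr_offsets : {set K} := [set u | qres (- u) && qres (1 - u)].

Lemma in_qr_offsets u : (u \in qr_offsets) = qres (- u) && qres (1 - u).
Proof. by rewrite inE. Qed.

Definition qr_col : finType := (K * {s : K | qres s})%type.

Definition qr_payA (i : K) (j : qr_col) := (i - j.1) / val j.2 \in qr_offsets.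

Definition qr_payB (i : K) (j : qr_col) := (i == j.1) || (i == j.1 + val j.2).

Lemma qr_payAB_qres i i' j : qr_payA i j -> qr_payB i' j -> qres (i' - i).
Proof.
case: j => c [s qs]; rewrite /qr_payA /qr_payB /= in_qr_offsets => /andP[qNu q1u].
set u := (i - c) / s.
have -> : i = c + u * s by rewrite /u divrK ?qres_unit // addrC subrK.
case/orP => /eqP ->.
  have -> : c - (c + u * s) = s * - u by ring.
  exact: qresM.
have -> : c + s - (c + u * s) = s * (1 - u) by ring.
exact: qresM.
Qed.

Lemma qr_payA_cover :
    (forall t d, qres t ->
       exists a b, [/\ a \in qr_offsets, b \in qr_offsets & a - t * b = d]) ->
  forall j j', exists l, qr_payA l j /\ qr_payA l j'.
Proof.
move=> cover [c [s qs]] [c' [s' qs']]; have sU := qres_unit qs.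
have [a [b [aU bU E]]] := cover (s' / s) ((c' - c) / s) (qresM qs' (qresV qs)).
have Ec : c' - c = a * s - b * s'.
  by rewrite -(divrK sU (c' - c)) -E mulrBl [s' / s * b * s]mulrAC divrK // [s' * b]mulrC.
exists (c + a * s); rewrite /qr_payA /=; split.
  by rewrite (_ : c + a * s - c = a * s) ?mulrK //; ring.
rewrite (_ : c + a * s - c' = b * s' - (c' - c - (a * s - b * s'))); last by ring.
by rewrite Ec subrr subr0 mulrK ?qres_unit.
Qed.

Lemma qr_payB_cover : (forall x : K, x != 0 -> qres x || qres (- x)) ->
  forall i i', exists j, qr_payB i j /\ qr_payB i' j.
Proof.
move=> dichotomy i i'; have [<- | ne] := eqVneq i i'.
  by exists (i, exist (@qres K) 1 (qres1 K)); rewrite /qr_payB eqxx.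
have /orP[q | q] : qres (i' - i) || qres (- (i' - i)).
  by apply: dichotomy; rewrite subr_eq0 eq_sym.
  by exists (i, exist (@qres K) _ q); rewrite /qr_payB /= subrKC !eqxx orbT.
by exists (i', exist (@qres K) _ q); rewrite /qr_payB /= opprB subrKC !eqxx orbT.
Qed.

End QuadraticResidueGame.

Definition F := 'Z_67.

Definition allF : seq F := [seq inZp k | k <- iota 0 67].

Lemma mem_allF x : x \in allF.
Proof.
apply/mapP; exists (val x); first by rewrite mem_iota /= add0n; case: x.
by apply/val_inj; rewrite /= modn_small //; case: x.
Qed.

Lemma qres_F : qres =1 qres_in allF.
Proof. by move=> x; apply: qres_inE mem_allF. Qed.

Lemma qresF_Nopp1 : ~~ qres (-1 : F).
Proof. by rewrite qres_F; vm_compute. Qed.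

Lemma qresF_dichotomy (x : F) : x != 0 -> qres x || qres (- x).
Proof.
have check : all (fun x : F => (x == 0) || qres_in allF x || qres_in allF (- x)) allF.
  by vm_compute.
by move=> x0; move: (allP check x (mem_allF x)); rewrite !qres_F (negbTE x0).
Qed.

Definition offsetsF := [seq u <- allF | qres_in allF (- u) && qres_in allF (1 - u)].

Definition covered_diffs (U : seq F) :=
  all (fun t => ~~ qres_in allF t || all (mem [seq a - t * b | a <- U, b <- U]) allF) allF.

Lemma covered_diffsP U t d : covered_diffs U -> qres t ->
  exists a b, [/\ a \in U, b \in U & a - t * b = d].
Proof.
move=> cov qt; have /orP[|tU] := allP cov t (mem_allF t); first by rewrite -qres_F qt.
have /allpairsP[[a b] /= [aU bU ->]] := allP tU d (mem_allF d).
by exists a, b; split.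
Qed.

(* The [let] makes the virtual machine evaluate [offsetsF] once instead of
   at every use inside [covered_diffs]. *)
Lemma covered_diffs_offsetsF : covered_diffs offsetsF.
Proof. by change (let U := offsetsF in covered_diffs U); vm_compute. Qed.

Lemma qresF_cover (t d : F) : qres t ->
  exists a b, [/\ a \in qr_offsets F, b \in qr_offsets F & a - t * b = d].
Proof.
case/(covered_diffsP d covered_diffs_offsetsF) => a [b [aU bU <-]].
move: aU bU; rewrite !mem_filter -!qres_F => /andP[qa _] /andP[qb _].
by exists a, b; rewrite !in_qr_offsets qa qb.
Qed.

Section BooleanMatrices.
Variables (R : realType) (I J : finType) (a : I -> J -> bool).

Definition bool_mx : 'M[R]_(#|I|, #|J|) :=
  \matrix_(i, j) (a (enum_val i) (enum_val j))%:R.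

Lemma win_lose_bool_mx : win_lose bool_mx.
Proof. by move=> i j; rewrite mxE; case: a; [right | left]. Qed.

Lemma bool_mx_neq0 i j : (bool_mx i j != 0) = a (enum_val i) (enum_val j).
Proof. by rewrite mxE; case: a; rewrite ?oner_eq0 ?eqxx. Qed.

Lemma bool_mx_cover_rows : (forall y y', exists x, a x y /\ a x y') ->
  forall j j', exists i, bool_mx i j = 1 /\ bool_mx i j' = 1.
Proof.
move=> cover j j'; have [x [axj axj']] := cover (enum_val j) (enum_val j').
by exists (enum_rank x); rewrite !mxE enum_rankK axj axj'.
Qed.

Lemma bool_mx_cover_cols : (forall x x', exists y, a x y /\ a x' y) ->
  forall i i', exists j, bool_mx i j = 1 /\ bool_mx i' j = 1.
Proof.
move=> cover i i'; have [y [aiy ai'y]] := cover (enum_val i) (enum_val i').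
by exists (enum_rank y); rewrite !mxE enum_rankK aiy ai'y.
Qed.

End BooleanMatrices.

Theorem theorem2 (R : realType) (delta : R) (hdelta : 0 < delta) :
  exists (m n : nat) (A B : 'M[R]_(m, n)),
    (0 < m)%N /\ (0 < n)%N /\
    win_lose A /\ win_lose B /\
    forall (p : 'I_m -> R) (q : 'I_n -> R),
      mixed p -> mixed q ->
      (#|supp p| <= 2)%N -> (#|supp q| <= 2)%N ->
      ~ eps_WSNE A B (1 - delta) p q.
Proof.
exists #|F|, #|qr_col F|, (bool_mx R (@qr_payA F)), (bool_mx R (@qr_payB F)).
split; first by apply/card_gt0P; exists 0.
split; first by apply/card_gt0P; exists (0, exist (@qres F) 1 (qres1 F)).
split; first exact: win_lose_bool_mx.
split; first exact: win_lose_bool_mx.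
move=> p q; apply: (no_small_support_wsne (r := fun i i' => qres (enum_val i' - enum_val i))).
- by rewrite ltrBlDr ltrDl.
- by move=> i i' /(qresN qresF_Nopp1); rewrite opprB.
- exact/bool_mx_cover_rows/qr_payA_cover/qresF_cover.
- exact/bool_mx_cover_cols/qr_payB_cover/qresF_dichotomy.
- by move=> i i' j; rewrite !bool_mx_neq0; apply: qr_payAB_qres.
Qed.
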